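(* For $t,a\in[0,1]$, the map $T_t\otimes\theta_a:\mathcal{M}_2\otimes\mathcal{M}_2\to\mathcal{M}_2\otimes\mathcal{M}_2$ is positive if and only if $t\le\frac{1}{2a+1}$.
   Context: For $t\in[0,1]$ the qubit depolarizing channel is $T_t(X)=(1-t)\mathrm{Tr}(X)\frac{I_2}{2}+tX$, and for $a\in[0,1]$, $\theta_a(X)=(1-a)X+aX^T$, both maps $\mathcal{M}_2\to\mathcal{M}_2$. *)

From HB Require Import structures.
From mathcomp Require Import all_boot all_order all_algebra.
From mathcomp Require Import reals.
From mathcomp.real_closed Require Import complex mxtens.
Set Implicit Arguments. Unset Strict Implicit. Unset Printing Implicit Defensive.
Import Order.TTheory GRing.Theory Num.Theory.
Local Open Scope ring_scope.

(* Complex numbers over a real field R : realType are R[i] (real_closed/complex.v);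
   M_n is 'M[R[i]]_n, and M_2 (x) M_2 is 'M[R[i]]_(2 * 2) with the Kronecker
   product *t of mxtens.v (index (i,k) <-> i * 2 + k). *)

Definition adjmx {C : numClosedFieldType} {m n} (A : 'M[C]_(m, n)) : 'M[C]_(n, m) :=
  (map_mx Num.conj A)^T.

Definition psd {C : numClosedFieldType} {n} (A : 'M[C]_n) : Prop :=
  adjmx A = A /\ forall v : 'cV[C]_n, 0 <= (adjmx v *m A *m v) 0 0.

Definition positive_map {C : numClosedFieldType} {n m}
  (Phi : 'M[C]_n -> 'M[C]_m) : Prop :=
  forall X : 'M[C]_n, psd X -> psd (Phi X).

Definition tens_map {C : numClosedFieldType}
  (Phi Psi : 'M[C]_2 -> 'M[C]_2) (X : 'M[C]_(2 * 2)) : 'M[C]_(2 * 2) :=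
  \sum_(i < 2) \sum_(j < 2) \sum_(k < 2) \sum_(l < 2)
    X (mxtens_index (i, k)) (mxtens_index (j, l))
      *: (Phi (delta_mx i j) *t Psi (delta_mx k l)).

Definition depol {R : realType} (t : R) (X : 'M[R[i]]_2) : 'M[R[i]]_2 :=
  (((1 - t)%:C)%C * \tr X / 2)%:M + (t%:C)%C *: X.

Definition theta {R : realType} (a : R) (X : 'M[R[i]]_2) : 'M[R[i]]_2 :=
  ((1 - a)%:C)%C *: X + (a%:C)%C *: X^T.

From HB Require Import structures.
From mathcomp Require Import all_boot all_order all_algebra.
From mathcomp Require Import reals.
From mathcomp.real_closed Require Import complex mxtens.
From mathcomp Require Import ring lra.
Import Order.TTheory GRing.Theory Num.Theory.
Local Open Scope ring_scope.

(* The map Phi := T_t (x) theta_a is linear and preserves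
   Hermitian matrices, and by the spectral theorem every positive semidefinite X
   is a nonnegative combination of rank-one matrices v v^H. Hence Phi is
   positive iff <w, Phi(v v^H) w> >= 0 for all v, w in C^2 (x) C^2. Writing
   v_(i,r) = U i r and w_(p,r) = W p r, this quadratic form equals
     (1-t)(1-a)/2 ||W U^H||^2 + (1-t)a/2 ||W U^T||^2 + t(1-a) |tr(W U^H)|^2
       + t a (||W U^T||^2 - A),     A = |(W U^T)_01 - (W U^T)_10|^2,
   (qform below, in real coordinates). Sufficiency follows from the two
   estimates A <= 2 ||W U^T||^2 and A <= ||W U^H||^2 + ||W U^T||^2; the second
   is a Cauchy-Schwarz/Schur-complement bound for the real 2x2 Gram matrix
   H = 2 Re(U^T conj U), proved for H + e I and letting e -> 0. Necessity:
   for U = I and W antisymmetric the form equals 1 - t - 2 t a. *)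

(* the two elements of 'I_2, as produced by big_ord_recl *)
Local Notation i0 := (ord0 : 'I_2).
Local Notation i1 := (lift ord0 ord0 : 'I_2).

Lemma ord2P (p : 'I_2) : p = i0 \/ p = i1.
Proof. by case: p => [[|[|//]]] p_lt2; [left | right]; apply: val_inj. Qed.

Lemma eq_i0i1 : (i0 == i1) = false. Proof. by []. Qed.
Lemma eq_i1i0 : (i1 == i0) = false. Proof. by []. Qed.

Lemma big_ord2 {V : nmodType} (F : 'I_2 -> V) : \sum_(i < 2) F i = F i0 + F i1.
Proof. by rewrite !big_ord_recl big_ord0 addr0. Qed.

Section HermitianForms.
Context {R : realFieldType}.
Implicit Types (a b p r s : R) (ur ui vr vi : 'I_2 -> R).

(* |a + i b|^2 *)
Definition sqn a b := a ^+ 2 + b ^+ 2.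

(* u^H H u for the real symmetric matrix H = [[p, r], [r, s]] and the complex
   vector u = ur + i ui of C^2 *)
Definition herm2 p r s ur ui :=
  p * sqn (ur i0) (ui i0) + 2 * r * (ur i0 * ur i1 + ui i0 * ui i1)
  + s * sqn (ur i1) (ui i1).

(* real and imaginary parts of the bilinear product u^T v of u = ur + i ui and
   v = vr + i vi *)
Definition bil_re ur ui vr vi :=
  ur i0 * vr i0 - ui i0 * vi i0 + (ur i1 * vr i1 - ui i1 * vi i1).
Definition bil_im ur ui vr vi :=
  ur i0 * vi i0 + ui i0 * vr i0 + (ur i1 * vi i1 + ui i1 * vr i1).

Lemma sqn_ge0 a b : 0 <= sqn a b.
Proof. by rewrite addr_ge0 // sqr_ge0. Qed.

(* Lagrange-type identity behind the Cauchy-Schwarz inequality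
   det(H) |u^T v|^2 <= (u^H H u) (v^H adj(H) v), adj(H) = [[s, -r], [-r, p]]. *)
Lemma herm2_lagrange p r s ur ui vr vi :
  herm2 p r s ur ui * herm2 s (- r) p vr vi
  - (p * s - r ^+ 2) * sqn (bil_re ur ui vr vi) (bil_im ur ui vr vi)
  = sqn ((p * ur i0 + r * ur i1) * vr i1 + (p * ui i0 + r * ui i1) * vi i1
         - ((r * ur i0 + s * ur i1) * vr i0 + (r * ui i0 + s * ui i1) * vi i0))
        ((p * ui i0 + r * ui i1) * vr i1 - (p * ur i0 + r * ur i1) * vi i1
         - ((r * ui i0 + s * ui i1) * vr i0 - (r * ur i0 + s * ur i1) * vi i0)).
Proof. rewrite /herm2 /bil_re /bil_im /sqn; ring. Qed.

(* A Hermitian form of a positive definite H is nonnegative: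
   p (u^H H u) = |p u0 + r u1|^2 + det(H) |u1|^2. *)
Lemma herm2_ge0 p r s ur ui : 0 < p -> 0 <= p * s - r ^+ 2 ->
  0 <= herm2 p r s ur ui.
Proof.
move=> p_gt0 det_ge0; rewrite -(pmulr_rge0 _ p_gt0).
have -> : p * herm2 p r s ur ui =
    sqn (p * ur i0 + r * ur i1) (p * ui i0 + r * ui i1)
    + (p * s - r ^+ 2) * sqn (ur i1) (ui i1).
  by rewrite /herm2 /sqn; ring.
by rewrite addr_ge0 ?mulr_ge0 ?sqn_ge0.
Qed.

(* AM-GM estimate of a cross term: if m^2 <= X1 X2 and D X_k <= A_k B_k, then
   2 D m <= A1 B2 + A2 B1, since (2 D m)^2 <= 4 (A1 B1) (A2 B2). *)
Lemma cross_term_le {D A1 A2 B1 B2 X1 X2 m : R} :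
  0 <= D -> 0 <= A1 -> 0 <= A2 -> 0 <= B1 -> 0 <= B2 -> 0 <= X1 -> 0 <= X2 ->
  m ^+ 2 <= X1 * X2 -> D * X1 <= A1 * B1 -> D * X2 <= A2 * B2 ->
  2 * D * m <= A1 * B2 + A2 * B1.
Proof.
move=> D_ge0 A1_ge0 A2_ge0 B1_ge0 B2_ge0 X1_ge0 X2_ge0 hm h1 h2.
have rhs_ge0 : 0 <= A1 * B2 + A2 * B1 by rewrite addr_ge0 ?mulr_ge0.
have [m_le0|m_gt0] := leP m 0.
  by apply: le_trans _ rhs_ge0; rewrite mulr_ge0_le0 ?mulr_ge0.
have prod : (D * X1) * (D * X2) <= (A1 * B1) * (A2 * B2).
  by apply: ler_pM; rewrite ?mulr_ge0.
have amgm : 4 * (A1 * B1) * (A2 * B2) <= (A1 * B2 + A2 * B1) ^+ 2.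
  have -> : (A1 * B2 + A2 * B1) ^+ 2 =
      4 * (A1 * B1) * (A2 * B2) + (A1 * B2 - A2 * B1) ^+ 2 by ring.
  by rewrite lerDl sqr_ge0.
rewrite -(@ler_pXn2r _ 2) ?nnegrE ?mulr_ge0 ?(ltW m_gt0) //.
apply: le_trans amgm.
have := ler_wpM2l (sqr_ge0 D) hm.
nra.
Qed.

Lemma sqn_add_le {D A1 A2 B1 B2 p1 q1 p2 q2 : R} :
  0 < D -> 0 <= A1 -> 0 <= A2 -> 0 <= B1 -> 0 <= B2 ->
  D * sqn p1 q1 <= A1 * B1 -> D * sqn p2 q2 <= A2 * B2 -> B1 + B2 <= D ->
  sqn (p1 + p2) (q1 + q2) <= A1 + A2.
Proof.
move=> D_gt0 A1_ge0 A2_ge0 B1_ge0 B2_ge0 h1 h2 hB.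
set m := p1 * p2 + q1 * q2.
have cs : m ^+ 2 <= sqn p1 q1 * sqn p2 q2.
  have -> : sqn p1 q1 * sqn p2 q2 = m ^+ 2 + (p1 * q2 - p2 * q1) ^+ 2.
    by rewrite /sqn /m; ring.
  by rewrite lerDl sqr_ge0.
have cross := cross_term_le (ltW D_gt0) A1_ge0 A2_ge0 B1_ge0 B2_ge0
  (sqn_ge0 p1 q1) (sqn_ge0 p2 q2) cs h1 h2.
rewrite -(ler_pM2l D_gt0).
have -> : D * sqn (p1 + p2) (q1 + q2) =
    D * sqn p1 q1 + D * sqn p2 q2 + 2 * D * m by rewrite /sqn /m; ring.
apply: (@le_trans _ _ (A1 * B1 + A2 * B2 + (A1 * B2 + A2 * B1))).
  by rewrite !lerD.
have -> : A1 * B1 + A2 * B2 + (A1 * B2 + A2 * B1) = (A1 + A2) * (B1 + B2) by ring.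
by rewrite mulrC ler_wpM2r ?addr_ge0.
Qed.

Lemma herm2_bil_sub_le p r s ur ui vr vi ur' ui' vr' vi' :
  0 < p -> 0 < s -> 0 < p * s - r ^+ 2 ->
  herm2 s (- r) p vr vi + herm2 s (- r) p vr' vi' <= p * s - r ^+ 2 ->
  sqn (bil_re ur ui vr vi - bil_re ur' ui' vr' vi')
      (bil_im ur ui vr vi - bil_im ur' ui' vr' vi')
  <= herm2 p r s ur ui + herm2 p r s ur' ui'.
Proof.
move=> p_gt0 s_gt0 det_gt0 hB.
have adj_det : 0 <= s * p - (- r) ^+ 2 by rewrite sqrrN mulrC ltW.
have cs ur1 ui1 vr1 vi1 :
    (p * s - r ^+ 2) * sqn (bil_re ur1 ui1 vr1 vi1) (bil_im ur1 ui1 vr1 vi1)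
    <= herm2 p r s ur1 ui1 * herm2 s (- r) p vr1 vi1.
  by rewrite -subr_ge0 herm2_lagrange sqn_ge0.
have h1 := cs ur ui vr vi.
have h2 : (p * s - r ^+ 2)
    * sqn (- bil_re ur' ui' vr' vi') (- bil_im ur' ui' vr' vi')
    <= herm2 p r s ur' ui' * herm2 s (- r) p vr' vi'.
  by rewrite /sqn !sqrrN; exact: cs.
have det_ge0 := ltW det_gt0.
by apply: (sqn_add_le det_gt0 _ _ _ _ h1 h2 hB); apply: herm2_ge0.
Qed.

Lemma cauchy_schwarz4 (a0 a1 a2 a3 b0 b1 b2 b3 : R) :
  (a0 * b0 + a1 * b1 + (a2 * b2 + a3 * b3)) ^+ 2
  <= (a0 ^+ 2 + a1 ^+ 2 + (a2 ^+ 2 + a3 ^+ 2))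
     * (b0 ^+ 2 + b1 ^+ 2 + (b2 ^+ 2 + b3 ^+ 2)).
Proof.
rewrite -subr_ge0.
have -> : (a0 ^+ 2 + a1 ^+ 2 + (a2 ^+ 2 + a3 ^+ 2))
    * (b0 ^+ 2 + b1 ^+ 2 + (b2 ^+ 2 + b3 ^+ 2))
    - (a0 * b0 + a1 * b1 + (a2 * b2 + a3 * b3)) ^+ 2 =
  (a0 * b1 - a1 * b0) ^+ 2 + (a0 * b2 - a2 * b0) ^+ 2 + (a0 * b3 - a3 * b0) ^+ 2
  + (a1 * b2 - a2 * b1) ^+ 2 + (a1 * b3 - a3 * b1) ^+ 2 + (a2 * b3 - a3 * b2) ^+ 2.
  by ring.
by rewrite !addr_ge0 ?sqr_ge0.
Qed.

Lemma le_of_le_add_eps {X Y K : R} : 0 <= K ->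
  (forall e, 0 < e -> X <= Y + e * K) -> X <= Y.
Proof.
move=> K_ge0 hX; apply/ler_addgt0Pr => e e_gt0.
have K1_gt0 : 0 < K + 1 by rewrite ltr_wpDl.
apply: le_trans (hX _ (divr_gt0 e_gt0 K1_gt0)) _; rewrite lerD2l.
rewrite mulrAC ler_pdivrMr // ler_pM2l //; lra.
Qed.

End HermitianForms.

(* The quadratic form of the theorem, in real coordinates. U = x + i y and
   W = c + i d are complex 2x2 matrices (U i r, W p r); the rows are the vectors
   U_i = x i + i y i and W_p = c p + i d p. *)
Section QuadraticForm.
Context {R : realFieldType}.
Variables x y c d : 'I_2 -> 'I_2 -> R.

(* entries of W U^T and of W U^H, where U^H is the conjugate transpose:
   (W U^T)_pi = W_p^T U_i and (W U^H)_pi = W_p^T conj(U_i) *)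
Definition WU_re p i := bil_re (c p) (d p) (x i) (y i).
Definition WU_im p i := bil_im (c p) (d p) (x i) (y i).
Definition WUc_re p i := bil_re (c p) (d p) (x i) (fun r => - y i r).
Definition WUc_im p i := bil_im (c p) (d p) (x i) (fun r => - y i r).

(* ||W U^H||^2, ||W U^T||^2, |tr (W U^H)|^2 and the squared antisymmetric part
   |(W U^T)_01 - (W U^T)_10|^2 *)
Definition normWUc := \sum_(p < 2) \sum_(i < 2) sqn (WUc_re p i) (WUc_im p i).
Definition normWU := \sum_(p < 2) \sum_(i < 2) sqn (WU_re p i) (WU_im p i).
Definition overlap := sqn (WUc_re i0 i0 + WUc_re i1 i1) (WUc_im i0 i0 + WUc_im i1 i1).
Definition antisym := sqn (WU_re i0 i1 - WU_re i1 i0) (WU_im i0 i1 - WU_im i1 i0).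

(* <w, (T_t (x) theta_a)(v v^H) w> when v, w in C^2 (x) C^2 have coefficient
   matrices U, W (lemma Phi_rank1_form below) *)
Definition qform (t a : R) :=
  (1 - t) * (1 - a) / 2 * normWUc + (1 - t) * a / 2 * normWU
  + t * (1 - a) * overlap + t * a * (normWU - antisym).

Lemma normWUc_ge0 : 0 <= normWUc.
Proof. by do 2!apply: sumr_ge0 => ? _; exact: sqn_ge0. Qed.

Lemma normWU_ge0 : 0 <= normWU.
Proof. by do 2!apply: sumr_ge0 => ? _; exact: sqn_ge0. Qed.

Lemma antisym_le_normWU : antisym <= 2 * normWU.
Proof.
rewrite /antisym /normWU !big_ord2.
have := sqn_ge0 (WU_re i0 i1 + WU_re i1 i0) (WU_im i0 i1 + WU_im i1 i0).
have := sqn_ge0 (WU_re i0 i0) (WU_im i0 i0).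
have := sqn_ge0 (WU_re i1 i1) (WU_im i1 i1).
rewrite /sqn; nra.
Qed.

(* The key estimate |(W U^T)_01 - (W U^T)_10|^2 <= ||W U^H||^2 + ||W U^T||^2.
   Both sides are Hermitian forms in the rows W_p: the right-hand side is
   sum_p W_p^H H W_p for H = 2 Re (U^T conj U) (a real 2x2 matrix), the left-hand
   side is |W_0^T U_1 - W_1^T U_0|^2, and the adjugate forms of U_1, U_0 add up to
   det H. The Schur-complement bound applies to H + e I, and e -> 0. *)
Lemma antisym_le_normWUc_normWU : antisym <= normWUc + normWU.
Proof.
pose Hp := 2 * (sqn (x i0 i0) (y i0 i0) + sqn (x i1 i0) (y i1 i0)).
pose Hr := 2 * (x i0 i0 * x i0 i1 + y i0 i0 * y i0 i1
                + (x i1 i0 * x i1 i1 + y i1 i0 * y i1 i1)).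
pose Hs := 2 * (sqn (x i0 i1) (y i0 i1) + sqn (x i1 i1) (y i1 i1)).
pose normU := sqn (x i0 i0) (y i0 i0) + sqn (x i0 i1) (y i0 i1)
            + (sqn (x i1 i0) (y i1 i0) + sqn (x i1 i1) (y i1 i1)).
pose normW := sqn (c i0 i0) (d i0 i0) + sqn (c i0 i1) (d i0 i1)
            + (sqn (c i1 i0) (d i1 i0) + sqn (c i1 i1) (d i1 i1)).
have normU_ge0 : 0 <= normU by rewrite /normU !addr_ge0 ?sqr_ge0.
have normW_ge0 : 0 <= normW by rewrite /normW !addr_ge0 ?sqr_ge0.
(* H is the Gram matrix of the two columns of U, seen in R^4 *)
have detH_ge0 : 0 <= Hp * Hs - Hr ^+ 2.
  have := cauchy_schwarz4 (x i0 i0) (y i0 i0) (x i1 i0) (y i1 i0)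
    (x i0 i1) (y i0 i1) (x i1 i1) (y i1 i1).
  rewrite /Hp /Hs /Hr /sqn; nra.
have rhsE e : herm2 (Hp + e) Hr (Hs + e) (c i0) (d i0)
    + herm2 (Hp + e) Hr (Hs + e) (c i1) (d i1) = normWUc + normWU + e * normW.
  rewrite /herm2 /normWUc /normWU !big_ord2 /WUc_re /WUc_im /WU_re /WU_im.
  by rewrite /bil_re /bil_im /Hp /Hr /Hs /normW /sqn; ring.
have adjE e : herm2 (Hs + e) (- Hr) (Hp + e) (x i1) (y i1)
    + herm2 (Hs + e) (- Hr) (Hp + e) (x i0) (y i0)
    = Hp * Hs - Hr ^+ 2 + e * normU.
  by rewrite /herm2 /Hp /Hr /Hs /normU /sqn; ring.
have Hp_ge0 : 0 <= Hp by rewrite /Hp mulr_ge0 // addr_ge0 ?sqn_ge0.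
have Hs_ge0 : 0 <= Hs by rewrite /Hs mulr_ge0 // addr_ge0 ?sqn_ge0.
apply: (le_of_le_add_eps normW_ge0) => e e_gt0; rewrite -rhsE.
have e_ge0 := ltW e_gt0.
have detE : (Hp + e) * (Hs + e) - Hr ^+ 2 =
    Hp * Hs - Hr ^+ 2 + e * (2 * normU) + e ^+ 2 by rewrite /Hp /Hs /normU; ring.
have eU_ge0 : 0 <= e * normU by rewrite mulr_ge0.
have e2_gt0 : 0 < e ^+ 2 by rewrite exprn_gt0.
apply: herm2_bil_sub_le.
- by rewrite ltr_wpDl.
- by rewrite ltr_wpDl.
- rewrite detE; lra.
- rewrite adjE detE; lra.
Qed.

(* The quadratic form is nonnegative in the whole region t (2a + 1) <= 1: it is a
   nonnegative combination of normWUc, normWU, overlap and of the two nonnegative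
   quantities given by the estimates above. *)
Lemma qform_ge0 (t a : R) : 0 <= t <= 1 -> 0 <= a <= 1 -> t * (2 * a + 1) <= 1 ->
  0 <= qform t a.
Proof.
move=> /andP[t_ge0 t_le1] /andP[a_ge0 a_le1] hta.
have O_ge0 : 0 <= overlap by exact: sqn_ge0.
have := antisym_le_normWU; have := antisym_le_normWUc_normWU.
have := normWUc_ge0; have := normWU_ge0.
rewrite /qform; move: normWUc normWU antisym => N1 N2 A N2_ge0 N1_ge0 hA1 hA2.
have [small|large] := leP (t * a) ((1 - t) * (1 - a) / 2).
- (* t a (N2 - A) is absorbed by t a (N1 + N2 - A) *)
  have -> : (1 - t) * (1 - a) / 2 * N1 + (1 - t) * a / 2 * N2 + t * (1 - a) * overlap
      + t * a * (N2 - A) = ((1 - t) * (1 - a) / 2 - t * a) * N1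
      + (1 - t) * a / 2 * N2 + t * (1 - a) * overlap + t * a * (N1 + N2 - A) by ring.
  have k1 : 0 <= (1 - t) * (1 - a) / 2 - t * a by rewrite subr_ge0.
  have k2 : 0 <= (1 - t) * a / 2 by rewrite divr_ge0 // mulr_ge0 // subr_ge0.
  have k3 : 0 <= t * (1 - a) by rewrite mulr_ge0 ?subr_ge0.
  have k4 : 0 <= t * a by rewrite mulr_ge0.
  by rewrite !addr_ge0 // mulr_ge0 //; lra.
- (* split t a (N2 - A) between N1 + N2 - A and 2 N2 - A *)
  have -> : (1 - t) * (1 - a) / 2 * N1 + (1 - t) * a / 2 * N2 + t * (1 - a) * overlap
      + t * a * (N2 - A) = (1 - t) * (1 - a) / 2 * (N1 + N2 - A)
      + (t * a - (1 - t) * (1 - a) / 2) * (2 * N2 - A)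
      + ((1 - t) / 2 - t * a) * N2 + t * (1 - a) * overlap by ring.
  have k1 : 0 <= (1 - t) * (1 - a) / 2.
    by rewrite divr_ge0 // mulr_ge0 // subr_ge0.
  have k2 : 0 <= t * a - (1 - t) * (1 - a) / 2 by rewrite subr_ge0 ltW.
  have k3 : 0 <= (1 - t) / 2 - t * a by lra.
  have k4 : 0 <= t * (1 - a) by rewrite mulr_ge0 ?subr_ge0.
  by rewrite !addr_ge0 // mulr_ge0 //; lra.
Qed.

End QuadraticForm.

Section TestVectors.
Context {R : realFieldType}.

(* The test vectors of the necessity part: U = I (v = sum_i e_i (x) e_i) and the
   antisymmetric W = E_01 - E_10 (w = e_0 (x) e_1 - e_1 (x) e_0). *)
Definition id2 (i r : 'I_2) : R := if i == r then 1 else 0.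
Definition asym2 (p r : 'I_2) : R :=
  if (p == i0) && (r == i1) then 1 else if (p == i1) && (r == i0) then -1 else 0.

Lemma qform_test (t a : R) :
  qform id2 (fun _ _ => 0) asym2 (fun _ _ => 0) t a = 1 - t - 2 * t * a.
Proof.
rewrite /qform /normWUc /normWU /overlap /antisym !big_ord2.
rewrite /WUc_re /WUc_im /WU_re /WU_im /bil_re /bil_im /sqn /id2 /asym2 /=.
rewrite ?eqxx ?eq_i0i1 ?eq_i1i0 /=; lra.
Qed.

End TestVectors.

Section PositiveSemidefinite.
Context {C : numClosedFieldType}.

Lemma adjmxE m n (A : 'M[C]_(m, n)) i j : adjmx A i j = Num.conj (A j i).
Proof. by rewrite /adjmx !mxE. Qed.

Lemma adjmxK m n (A : 'M[C]_(m, n)) : adjmx (adjmx A) = A.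
Proof. by apply/matrixP => i j; rewrite !adjmxE conjCK. Qed.

Lemma adjmxM m n p (A : 'M[C]_(m, n)) (B : 'M[C]_(n, p)) :
  adjmx (A *m B) = adjmx B *m adjmx A.
Proof. by rewrite /adjmx map_mxM trmx_mul. Qed.

(* the conjugate transpose as written by the library (in normalmx, unitarymx) *)
Lemma conj_trmx_adjmx m n (A : 'M[C]_(m, n)) : map_mx Num.conj A^T = adjmx A.
Proof. by apply/matrixP => i j; rewrite adjmxE !mxE. Qed.

Lemma psd_rank1 {n} (v : 'cV[C]_n) : psd (v *m adjmx v).
Proof.
split; first by rewrite adjmxM adjmxK.
move=> u; rewrite mulmxA -[adjmx u *m v *m adjmx v *m u]mulmxA.
have -> : adjmx v *m u = adjmx (adjmx u *m v) by rewrite adjmxM adjmxK.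
by rewrite mxE big_ord1 adjmxE mul_conjC_ge0.
Qed.

Lemma psd_rank1_decomp {n} {X : 'M[C]_n} : psd X ->
  exists (d : 'I_n -> C) (V : 'I_n -> 'cV[C]_n),
    (forall k, 0 <= d k) /\ X = \sum_(k < n) d k *: (V k *m adjmx (V k)).
Proof.
case=> X_herm X_pos.
have : X \is normalmx by rewrite qualifE conj_trmx_adjmx X_herm eqxx.
move/orthomx_spectralP; set P := spectralmx X; set sp := spectral_diag X => XE.
rewrite invmx_unitary ?spectral_unitarymx // conj_trmx_adjmx in XE.
have PP : P *m adjmx P = 1%:M.
  by rewrite -conj_trmx_adjmx; apply/unitarymxP; exact: spectral_unitarymx.
(* the eigenvectors are the conjugated rows of P *)
pose V k := adjmx (row k P).
exists (fun k => sp 0 k), V; split=> [k|].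
  have := X_pos (V k).
  suff -> : (adjmx (V k) *m X *m V k) 0 0 = sp 0 k by [].
  rewrite {1}XE /V adjmxK !mulmxA -row_mul PP -row_mul mul1mx -row_mul.
  rewrite mul_diag_mx mxE -[RHS]mulr1.
  have := congr1 (fun M : 'M[C]_n => M k k) PP; rewrite !mxE eqxx mulr1n => <-.
  by rewrite mulr_sumr; apply: eq_bigr => j _; rewrite !mxE mulrA.
apply/matrixP => i j; rewrite {1}XE summxE mul_mx_diag mxE.
apply: eq_bigr => l _; rewrite !mxE big_ord1 /V !adjmxE !mxE conjCK; ring.
Qed.

End PositiveSemidefinite.

Section TensorMapLinear.
Context {C : numClosedFieldType} (Phi Psi : 'M[C]_2 -> 'M[C]_2).

Lemma tens_mapD (X Y : 'M[C]_(2 * 2)) :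
  tens_map Phi Psi (X + Y) = tens_map Phi Psi X + tens_map Phi Psi Y.
Proof.
rewrite /tens_map -big_split; apply: eq_bigr => i _; rewrite -big_split.
apply: eq_bigr => j _; rewrite -big_split; apply: eq_bigr => k _.
by rewrite -big_split; apply: eq_bigr => l _; rewrite mxE scalerDl.
Qed.

Lemma tens_map0 : tens_map Phi Psi 0 = 0.
Proof.
rewrite /tens_map big1 // => i _; rewrite big1 // => j _; rewrite big1 // => k _.
by rewrite big1 // => l _; rewrite mxE scale0r.
Qed.

Lemma tens_mapZ (e : C) (X : 'M[C]_(2 * 2)) :
  tens_map Phi Psi (e *: X) = e *: tens_map Phi Psi X.
Proof.
rewrite /tens_map scaler_sumr; apply: eq_bigr => i _; rewrite scaler_sumr.
apply: eq_bigr => j _; rewrite scaler_sumr; apply: eq_bigr => k _.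
by rewrite scaler_sumr; apply: eq_bigr => l _; rewrite mxE scalerA.
Qed.

Lemma tens_map_sum n (e : 'I_n -> C) (Y : 'I_n -> 'M[C]_(2 * 2)) :
  tens_map Phi Psi (\sum_(k < n) e k *: Y k)
  = \sum_(k < n) e k *: tens_map Phi Psi (Y k).
Proof.
rewrite (big_morph (tens_map Phi Psi) tens_mapD tens_map0).
by apply: eq_bigr => k _; rewrite tens_mapZ.
Qed.

End TensorMapLinear.

Local Notation sqC z := (z * Num.conj z).

Section PureInputs.
Context {R : rcfType}.
Local Notation C := R[i].

(* Entries of (T_t (x) theta_a)(v v^H) when v has coefficient array U,
   v_(i,r) = U i r; rows p, q refer to the first factor and r, s to the second. *)
Definition Phi_pure_entry (t a : R) (U : 'I_2 -> 'I_2 -> C) (p q r s : 'I_2) : C :=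
  ((1 - t) / 2)%:C%C * (p == q)%:R *
    ((1 - a)%:C%C * \sum_(i < 2) U i r * Num.conj (U i s)
     + a%:C%C * \sum_(i < 2) U i s * Num.conj (U i r))
  + t%:C%C * ((1 - a)%:C%C * (U p r * Num.conj (U q s))
              + a%:C%C * (U p s * Num.conj (U q r))).

(* <w, (T_t (x) theta_a)(v v^H) w> for w with coefficient array W *)
Definition Phi_pure_form (t a : R) (U W : 'I_2 -> 'I_2 -> C) : C :=
  \sum_(q < 2) \sum_(s < 2) \sum_(p < 2) \sum_(r < 2)
    Num.conj (W p r) * Phi_pure_entry t a U p q r s * W q s.

Definition WU (U W : 'I_2 -> 'I_2 -> C) (p i : 'I_2) : C :=
  W p i0 * U i i0 + W p i1 * U i i1.
Definition WUc (U W : 'I_2 -> 'I_2 -> C) (p i : 'I_2) : C :=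
  W p i0 * Num.conj (U i i0) + W p i1 * Num.conj (U i i1).


Lemma Phi_pure_formE (t a : R) (U W : 'I_2 -> 'I_2 -> C) :
  Phi_pure_form t a U W =
    ((1 - t) * (1 - a) / 2)%:C%C * \sum_(p < 2) \sum_(i < 2) sqC (WUc U W p i)
  + ((1 - t) * a / 2)%:C%C * \sum_(p < 2) \sum_(i < 2) sqC (WU U W p i)
  + (t * (1 - a))%:C%C * sqC (WUc U W i0 i0 + WUc U W i1 i1)
  + (t * a)%:C%C * (\sum_(p < 2) \sum_(i < 2) sqC (WU U W p i)
                    - sqC (WU U W i0 i1 - WU U W i1 i0)).
Proof.
rewrite /Phi_pure_form /Phi_pure_entry /WU /WUc !big_ord2 !eqxx eq_i0i1 eq_i1i0.
rewrite !(rmorphD Num.conj, rmorphB Num.conj, rmorphN Num.conj).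
rewrite !(rmorphM Num.conj) /= !conjCK.
rewrite !(rmorphM (real_complex R)) !(rmorphB (real_complex R)) !rmorph1.
ring.
Qed.
End PureInputs.

Section Coordinates.
Context {R : rcfType}.
Variables x y c d : 'I_2 -> 'I_2 -> R.
Let U (i r : 'I_2) : R[i] := (x i r +i* y i r)%C.
Let W (p r : 'I_2) : R[i] := (c p r +i* d p r)%C.

Local Ltac complex_ring :=
  apply/eqP; rewrite eq_complex /=; apply/andP; split; apply/eqP; ring.

Lemma WU_sqC p i : sqC (WU U W p i) = (sqn (WU_re x y c d p i) (WU_im x y c d p i))%:C%C.
Proof. rewrite /WU /U /W /WU_re /WU_im /bil_re /bil_im /sqn; complex_ring. Qed.

Lemma WUc_sqC p i :
  sqC (WUc U W p i) = (sqn (WUc_re x y c d p i) (WUc_im x y c d p i))%:C%C.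
Proof. rewrite /WUc /U /W /WUc_re /WUc_im /bil_re /bil_im /sqn; complex_ring. Qed.

Lemma overlap_sqC : sqC (WUc U W i0 i0 + WUc U W i1 i1) = (overlap x y c d)%:C%C.
Proof.
rewrite /WUc /U /W /overlap /WUc_re /WUc_im /bil_re /bil_im /sqn; complex_ring.
Qed.

Lemma antisym_sqC : sqC (WU U W i0 i1 - WU U W i1 i0) = (antisym x y c d)%:C%C.
Proof.
rewrite /WU /U /W /antisym /WU_re /WU_im /bil_re /bil_im /sqn; complex_ring.
Qed.

Lemma Phi_pure_form_coord (t a : R) : Phi_pure_form t a U W = (qform x y c d t a)%:C%C.
Proof.
rewrite Phi_pure_formE !big_ord2 !WU_sqC !WUc_sqC overlap_sqC antisym_sqC.
rewrite -!(rmorphD (real_complex R)) -(rmorphB (real_complex R)).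
rewrite -!(rmorphM (real_complex R)) -!(rmorphD (real_complex R)).
by rewrite /qform /normWUc /normWU !big_ord2.
Qed.

End Coordinates.

Section DepolarizingTheta.
Context {R : realType}.
Local Notation C := R[i].
Local Notation Phi t a := (tens_map (depol t) (theta a)).

Lemma mxtrace_delta (i j : 'I_2) : \tr (delta_mx i j : 'M[C]_2) = (i == j)%:R.
Proof.
rewrite /mxtrace big_ord2 !mxE.
by case: (ord2P i) => ->; case: (ord2P j) => ->; rewrite ?eqxx ?eq_i0i1 ?eq_i1i0 /=; ring.
Qed.

Lemma depol_delta (t : R) (i j p q : 'I_2) : depol t (delta_mx i j) p q =
  ((1 - t) / 2)%:C%C * (i == j)%:R * (p == q)%:R + t%:C%C * ((p == i) && (q == j))%:R.
Proof.
rewrite /depol !mxE mxtrace_delta (rmorphM (real_complex R)) fmorphV rmorph_nat.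
ring.
Qed.

Lemma theta_delta (a : R) (k l r s : 'I_2) : theta a (delta_mx k l) r s =
  (1 - a)%:C%C * ((r == k) && (s == l))%:R + a%:C%C * ((s == k) && (r == l))%:R.
Proof. by rewrite /theta !mxE. Qed.

Lemma tens_map_entry (Phi1 Phi2 : 'M[C]_2 -> 'M[C]_2) (X : 'M[C]_(2 * 2))
    (p q r s : 'I_2) :
  tens_map Phi1 Phi2 X (mxtens_index (p, r)) (mxtens_index (q, s)) =
  \sum_(i < 2) \sum_(j < 2) \sum_(k < 2) \sum_(l < 2)
     X (mxtens_index (i, k)) (mxtens_index (j, l))
       * (Phi1 (delta_mx i j) p q * Phi2 (delta_mx k l) r s).
Proof.
rewrite /tens_map summxE; apply: eq_bigr => i _; rewrite summxE.
apply: eq_bigr => j _; rewrite summxE; apply: eq_bigr => k _; rewrite summxE.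
by apply: eq_bigr => l _; rewrite mxE tensmxE.
Qed.

(* Entries of Phi X: (1 - t)/2 I (x) theta_a(tr_1 X) + t (id (x) theta_a)(X). *)
Definition Phi_entry (t a : R) (X : 'M[C]_(2 * 2)) (p q r s : 'I_2) : C :=
  ((1 - t) / 2)%:C%C * (p == q)%:R *
    ((1 - a)%:C%C * \sum_(i < 2) X (mxtens_index (i, r)) (mxtens_index (i, s))
     + a%:C%C * \sum_(i < 2) X (mxtens_index (i, s)) (mxtens_index (i, r)))
  + t%:C%C * ((1 - a)%:C%C * X (mxtens_index (p, r)) (mxtens_index (q, s))
              + a%:C%C * X (mxtens_index (p, s)) (mxtens_index (q, r))).

Lemma Phi_entryE (t a : R) (X : 'M[C]_(2 * 2)) (p q r s : 'I_2) :
  Phi t a X (mxtens_index (p, r)) (mxtens_index (q, s)) = Phi_entry t a X p q r s.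
Proof.
rewrite tens_map_entry.
under eq_bigr => i _ do under eq_bigr => j _ do under eq_bigr => k _ do
  under eq_bigr => l _ do rewrite depol_delta theta_delta.
rewrite /Phi_entry !big_ord2.
case: (ord2P p) => ->; case: (ord2P q) => ->;
  case: (ord2P r) => ->; case: (ord2P s) => ->.
all: rewrite ?eqxx ?eq_i0i1 ?eq_i1i0 /=; ring.
Qed.

(* conjc_real, stated with the generic conjugation Num.conj *)
Lemma conjC_real (e : R) : Num.conj (e%:C%C) = e%:C%C :> C.
Proof. exact: conjc_real. Qed.

Lemma Phi_herm (t a : R) (X : 'M[C]_(2 * 2)) : adjmx X = X ->
  adjmx (Phi t a X) = Phi t a X.
Proof.
move=> X_herm; have conjX m n : Num.conj (X m n) = X n m by rewrite -adjmxE X_herm.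
apply/matrixP => m n; rewrite adjmxE.
case: (mxtens_indexP m) => p r; case: (mxtens_indexP n) => q s.
rewrite !Phi_entryE /Phi_entry !big_ord2.
rewrite !(rmorphD, rmorphM) /= !conjC_real !conjX rmorph_nat [q == p]eq_sym.
ring.
Qed.

Lemma Phi_pure_entryE (t a : R) (v : 'cV[C]_(2 * 2)) (U : 'I_2 -> 'I_2 -> C) :
  (forall i r, v (mxtens_index (i, r)) 0 = U i r) -> forall p q r s : 'I_2,
  Phi t a (v *m adjmx v) (mxtens_index (p, r)) (mxtens_index (q, s)) =
  Phi_pure_entry t a U p q r s.
Proof.
move=> vU p q r s.
have vvE i k j l : (v *m adjmx v) (mxtens_index (i, k)) (mxtens_index (j, l))
    = U i k * Num.conj (U j l) by rewrite mxE big_ord1 adjmxE !vU.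
by rewrite Phi_entryE /Phi_entry /Phi_pure_entry !big_ord2 !vvE.
Qed.

Lemma sum_mxtens (F : 'I_(2 * 2) -> C) :
  \sum_m F m = \sum_(p < 2) \sum_(r < 2) F (mxtens_index (p, r)).
Proof.
rewrite (reindex (@mxtens_index 2 2)) /=; last first.
  by exists (@mxtens_unindex 2 2) => m _; rewrite (mxtens_indexK, mxtens_unindexK).
by rewrite pair_big /=; apply: eq_bigr => -[p r] _.
Qed.

Lemma Phi_rank1_form (t a : R) {v w : 'cV[C]_(2 * 2)} {x y c d : 'I_2 -> 'I_2 -> R} :
  (forall i r, v (mxtens_index (i, r)) 0 = (x i r +i* y i r)%C) ->
  (forall p r, w (mxtens_index (p, r)) 0 = (c p r +i* d p r)%C) ->
  (adjmx w *m Phi t a (v *m adjmx v) *m w) 0 0 = (qform x y c d t a)%:C%C.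
Proof.
move=> vE wE; rewrite -Phi_pure_form_coord mxE.
under eq_bigr => n _ do rewrite mxE big_distrl /=.
rewrite sum_mxtens /Phi_pure_form; apply: eq_bigr => q _; apply: eq_bigr => s _.
rewrite sum_mxtens; apply: eq_bigr => p _; apply: eq_bigr => r _.
by rewrite (Phi_pure_entryE _ _ _ _ vE) adjmxE !wE.
Qed.

Lemma cV_coords (v : 'cV[C]_(2 * 2)) (i r : 'I_2) :
  v (mxtens_index (i, r)) 0 =
  (complex.Re (v (mxtens_index (i, r)) 0)
   +i* complex.Im (v (mxtens_index (i, r)) 0))%C.
Proof. by case: (v _ 0). Qed.

Lemma Phi_positive (t a : R) : 0 <= t <= 1 -> 0 <= a <= 1 ->
  t * (2 * a + 1) <= 1 -> positive_map (Phi t a).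
Proof.
move=> t01 a01 hta X X_psd; split; first by apply: Phi_herm; case: X_psd.
move=> w; have [e [V [e_ge0 ->]]] := psd_rank1_decomp X_psd.
rewrite tens_map_sum mulmx_sumr mulmx_suml summxE; apply: sumr_ge0 => k _.
rewrite -scalemxAr -scalemxAl mxE mulr_ge0 //.
by rewrite (Phi_rank1_form _ _ (cV_coords (V k)) (cV_coords w)) ler0c qform_ge0.
Qed.

Lemma Phi_positive_bound (t a : R) : positive_map (Phi t a) -> t * (2 * a + 1) <= 1.
Proof.
move=> Phi_pos.
pose vec (f : 'I_2 -> 'I_2 -> R) : 'cV[C]_(2 * 2) :=
  \col_m (f (mxtens_unindex m).1 (mxtens_unindex m).2 +i* 0)%C.
have vecE f i r : vec f (mxtens_index (i, r)) 0 = (f i r +i* (fun _ _ => 0) i r)%C.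
  by rewrite mxE mxtens_indexK.
have := (Phi_pos _ (psd_rank1 (vec id2))).2 (vec asym2).
rewrite (Phi_rank1_form _ _ (vecE id2) (vecE asym2)) ler0c qform_test.
lra.
Qed.

End DepolarizingTheta.

Theorem mainTheorem16 (R : realType) (t a : R) :
  0 <= t <= 1 -> 0 <= a <= 1 ->
  (positive_map (tens_map (depol t) (theta a)) <-> t <= 1 / (2 * a + 1)).
Proof.
move=> t01 a01.
have a_pos : 0 < 2 * a + 1 by case/andP: a01 => a_ge0 _; lra.
rewrite ler_pdivlMr //; split; first exact: Phi_positive_bound.
exact: Phi_positive.
Qed.
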